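(* Let $G$ be a graph that is well-separable with respect to a set $\mathcal P$ of principal $k$-profiles, let $P,P'\in\mathcal P$ and let $(A,B)\in\mathcal R_{\rm eff}(P,P')$. Then there is a component $X$ of $G[A\setminus B]$ such that $(X\cup N(X),V(G)\setminus X)\in\mathcal R_{\rm eff}(P,P')$.
   Context: A separation of $G$ is an ordered pair $(A,B)$ of subsets of $V(G)$ with $A\cup B=V(G)$ and no edge between $A\setminus B$ and $B\setminus A$; its order is $|A\cap B|$. $(A,B)\le(C,D)$ means $A\subseteq C$, $D\subseteq B$. A profile is a set $P$ of separations with (P1) if $(C,D)\le(A,B)\in P$ then $(D,C)\notin P$, and (P2) if $(A,B),(C,D)\in P$ then $(B\cap D,A\cup C)\notin P$. $P$ is principal if for every family $((A_i,B_i))_{i\in I}$ in $P$ with all $A_i\cap B_i$ equal, $\bigcap_{i\in I}(B_i\setminus A_i)\neq\emptyset$. $P$ is a $k$-profile if all its separations have order $<k$ and for each separation $(A,B)$ of order $<k$, $(A,B)\in P$ or $(B,A)\in P$. A separation $(A,B)$ distinguishes $P,P'$ if $(A,B)\in P,(B,A)\in P'$ or vice versa, efficiently if no separation of smaller order distinguishes them. $\kappa(\mathcal P,G)$ is the minimum order of a separation distinguishing two profiles of $\mathcal P$. $\mathcal R_{\rm eff}(P,P')$ is the set of separations of order $\kappa(\mathcal P,G)$ distinguishing $P$ and $P'$ efficiently. $\mathcal R(k,\mathcal P,G)$ is the set of separations of finite order at most $k$ distinguishing two profiles of $\mathcal P$. A component $C$ of $G-(A\cap B)$ is degenerated if $N(C)\subsetneq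 A\cap B$. $G$ is well-separable with respect to $\mathcal P$ if for no separation $(A,B)\in\mathcal R(\kappa(\mathcal P,G),\mathcal P,G)$ does $G-(A\cap B)$ have a degenerated component (the paper phrases this as: for every separation of order $\kappa(\mathcal P,G)$ no component of $G-(A\cap B)$ is degenerated, that is, the set of separations $(C\cup N(C),V(G)\setminus C)$ with $C$ a degenerated component for a separation in $\mathcal R(\kappa(\mathcal P,G),\mathcal P,G)$ is empty). *)

From Stdlib Require Import List Arith Relations.
Import ListNotations.

Section Defs.
Variable V : Type.
Variable E : V -> V -> Prop.

Definition vset := V -> Prop.
Definition sep := (vset * vset)%type.

Definition has_card (S : vset) (n : nat) : Prop :=
  exists l : list V, NoDup l /\ (forall x, S x <-> In x l) /\ length l = n.

Definition sepI (s : sep) : vset := fun x => fst s x /\ snd s x.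

Definition order_is (s : sep) (n : nat) : Prop := has_card (sepI s) n.

Definition is_separation (s : sep) : Prop :=
  (forall x, fst s x \/ snd s x) /\
  (forall x y, fst s x -> ~ snd s x -> snd s y -> ~ fst s y -> ~ E x y).

Definition sep_le (s t : sep) : Prop :=
  (forall x, fst s x -> fst t x) /\ (forall x, snd t x -> snd s x).

Definition flip (s : sep) : sep := (snd s, fst s).

Definition is_profile (P : sep -> Prop) : Prop :=
  (forall s, P s -> is_separation s) /\
  (forall s t, is_separation s -> sep_le s t -> P t -> ~ P (flip s)) /\
  (forall s t, P s -> P t ->
     ~ P ((fun x => snd s x /\ snd t x), (fun x => fst s x \/ fst t x))).

Definition is_principal (P : sep -> Prop) : Prop :=
  forall (I : Type) (f : I -> sep),
    (forall i, P (f i)) ->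
    (forall i j x, sepI (f i) x <-> sepI (f j) x) ->
    exists x, forall i, snd (f i) x /\ ~ fst (f i) x.

Definition is_k_profile (k : nat) (P : sep -> Prop) : Prop :=
  is_profile P /\
  (forall s, P s -> exists n, order_is s n /\ n < k) /\
  (forall s, is_separation s -> (exists n, order_is s n /\ n < k) ->
     P s \/ P (flip s)).

Definition distinguishes (s : sep) (P P' : sep -> Prop) : Prop :=
  is_separation s /\ ((P s /\ P' (flip s)) \/ (P (flip s) /\ P' s)).

Definition distinguishes_eff (s : sep) (P P' : sep -> Prop) : Prop :=
  distinguishes s P P' /\
  exists n, order_is s n /\
    forall t m, order_is t m -> m < n -> ~ distinguishes t P P'.

Definition is_kappa (Ps : (sep -> Prop) -> Prop) (n : nat) : Prop :=
  (exists s P P', Ps P /\ Ps P' /\ distinguishes s P P' /\ order_is s n) /\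
  (forall s P P' m, Ps P -> Ps P' -> distinguishes s P P' -> order_is s m ->
     n <= m).

Definition R_eff (Ps : (sep -> Prop) -> Prop) (P P' : sep -> Prop) (s : sep)
  : Prop :=
  exists n, is_kappa Ps n /\ order_is s n /\ distinguishes_eff s P P'.

Definition R_set (k : nat) (Ps : (sep -> Prop) -> Prop) (s : sep) : Prop :=
  (exists n, order_is s n /\ n <= k) /\
  exists P P', Ps P /\ Ps P' /\ distinguishes s P P'.

Definition nbh (C : vset) : vset :=
  fun v => ~ C v /\ exists u, C u /\ E u v.

Definition is_component (Y C : vset) : Prop :=
  (exists x, C x) /\
  (forall x, C x -> Y x) /\
  (forall x y, C x -> C y ->
     clos_refl_trans V (fun u w => C u /\ C w /\ E u w) x y) /\
  (forall x y, C x -> Y y -> E x y -> C y).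

Definition degenerated (S C : vset) : Prop :=
  is_component (fun v => ~ S v) C /\
  (forall v, nbh C v -> S v) /\ (exists v, S v /\ ~ nbh C v).

Definition well_separable (Ps : (sep -> Prop) -> Prop) : Prop :=
  forall n, is_kappa Ps n ->
    forall s, R_set n Ps s -> forall C, ~ degenerated (sepI s) C.

End Defs.

(** Since G is well-separable, every component X of G[A \ B] has N(X) = A ∩ B,
    so (X ∪ N(X), V \ X) is a separation with the same separator as (A, B) lying
    below it; hence it has the same order, and every k-profile containing (A, B)
    contains it as well.  The profile Q containing (B, A) cannot contain all the
    separations (X ∪ N(X), V \ X): together with (B, A) they share the separator
    A ∩ B, so principality would give a vertex of A \ B lying in no component of
    G[A \ B].  So Q contains (V \ X, X ∪ N(X)) for some component X, and
    (X ∪ N(X), V \ X) distinguishes P and P' efficiently, like (A, B). *)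
From Stdlib Require Import Relations Classical.

Lemma clos_refl_trans_sym (T : Type) (R : relation T) :
  (forall a b, R a b -> R b a) ->
  forall a b, clos_refl_trans T R a b -> clos_refl_trans T R b a.
Proof.
  intros HR a b H; induction H.
  - now apply rt_step, HR.
  - apply rt_refl.
  - eapply rt_trans; eauto.
Qed.

Section Separations.
Variable V : Type.
Variable E : V -> V -> Prop.

Lemma has_card_ext (S T : vset V) n :
  (forall x, S x <-> T x) -> has_card V S n -> has_card V T n.
Proof.
  intros HST [l [Hl [HS Hlen]]]; exists l; repeat split; auto.
  - intro Tx; now apply HS, HST.
  - intro Hx; now apply HST, HS.
Qed.

Lemma order_is_ext (s t : sep V) n :
  (forall x, sepI V s x <-> sepI V t x) -> order_is V s n -> order_is V t n.
Proof. apply has_card_ext. Qed.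

Lemma distinguishes_sym (s : sep V) (P P' : sep V -> Prop) :
  distinguishes V E s P P' -> distinguishes V E s P' P.
Proof. unfold distinguishes; tauto. Qed.

Lemma R_eff_same_separator (Ps : (sep V -> Prop) -> Prop) (P P' : sep V -> Prop)
  (s t : sep V) :
  (forall x, sepI V s x <-> sepI V t x) ->
  distinguishes V E t P P' -> R_eff V E Ps P P' s -> R_eff V E Ps P P' t.
Proof.
  intros Hst Hdt [n [Hk [Hn [_ [n' [Hn' Hmin]]]]]].
  exists n; split; [exact Hk|split; [now apply (order_is_ext s)|split; [exact Hdt|]]].
  exists n'; split; [now apply (order_is_ext s)|exact Hmin].
Qed.

(* Axiom (P1) forbids [flip s], completeness then forces [s]. *)
Lemma k_profile_le_closed k (Q : sep V -> Prop) (s t : sep V) n :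
  is_k_profile V E k Q -> is_separation V E s -> sep_le V s t ->
  order_is V s n -> n < k -> Q t -> Q s.
Proof.
  intros [[_ [Hp1 _]] [_ Hcomplete]] Hs Hle Hn Hnk Ht.
  destruct (Hcomplete s Hs) as [HQ|HQ]; [eauto|exact HQ|].
  exfalso; exact (Hp1 s t Hs Hle Ht HQ).
Qed.

Section Components.
Hypothesis Esym : forall x y, E x y -> E y x.

Lemma component_exists (Y : vset V) x :
  Y x -> exists X, is_component V E Y X /\ X x.
Proof.
  intros Yx.
  set (step := fun u w => Y w /\ E u w).
  set (C := clos_refl_trans V step x).
  assert (CY : forall y, C y -> Y y).
  { intros y Hy; induction (clos_rt_rtn1 _ _ _ _ Hy) as [|u w [Yw _]]; auto. }
  assert (Hpath : forall y, C y ->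
            clos_refl_trans V (fun u w => C u /\ C w /\ E u w) x y).
  { intros y Hy; induction (clos_rt_rtn1 _ _ _ _ Hy) as [|u w Huw Hxu IH].
    - apply rt_refl.
    - assert (Cu : C u) by now apply clos_rtn1_rt.
      apply rt_trans with u; [now apply IH|].
      apply rt_step; repeat split; [exact Cu| |apply Huw].
      apply rt_trans with u; [exact Cu|now apply rt_step]. }
  exists C; repeat split.
  - exists x; apply rt_refl.
  - exact CY.
  - intros y z Hy Hz; apply rt_trans with x; [|now apply Hpath].
    apply clos_refl_trans_sym; [|now apply Hpath].
    intros a b (Ca & Cb & Hab); auto.
  - intros y z Hy Yz Hyz; apply rt_trans with y; [exact Hy|now apply rt_step].
  - apply rt_refl.
Qed.

End Components.

Definition component_sep (X : vset V) : sep V :=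
  ((fun v => X v \/ nbh V E X v), (fun v => ~ X v)).

Lemma component_sep_separation (X : vset V) : is_separation V E (component_sep X).
Proof.
  split; simpl.
  - intro x; destruct (classic (X x)); auto.
  - intros x y [Hx|[HnXx _]] ? HnXy Hny Hxy; [|contradiction].
    apply Hny; right; split; [exact HnXy|eauto].
Qed.

Lemma sepI_component_sep (X : vset V) x : sepI V (component_sep X) x <-> nbh V E X x.
Proof. unfold sepI, component_sep, nbh; simpl; tauto. Qed.

Section SideComponent.
Variables A B X : vset V.
Hypothesis HAB : is_separation V E (A, B).
Hypothesis HX : is_component V E (fun v => A v /\ ~ B v) X.

Lemma side_component_step x y : X x -> E x y -> ~ (A y /\ B y) -> X y.
Proof.
  destruct HAB as [Hcover Hedge]; destruct HX as (_ & HXside & _ & Hclosed).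
  intros Hx Hxy Hy; apply (Hclosed x y Hx); [|exact Hxy].
  destruct (HXside x Hx) as [HAx HBx].
  destruct (classic (A y)) as [HAy|HAy]; [tauto|].
  destruct (Hcover y) as [|HBy]; [contradiction|].
  destruct (Hedge x y HAx HBx HBy HAy Hxy).
Qed.

Lemma nbh_side_component v : nbh V E X v -> A v /\ B v.
Proof.
  intros [HnXv [u [Hu Huv]]]; apply NNPP; intro Hv.
  exact (HnXv (side_component_step u v Hu Huv Hv)).
Qed.

Lemma side_component_of_separator :
  is_component V E (fun v => ~ sepI V (A, B) v) X.
Proof.
  destruct HX as (Hne & HXside & Hconn & _).
  split; [exact Hne|split; [|split; [exact Hconn|]]].
  - intros x Hx [HAx HBx]; exact (proj2 (HXside x Hx) HBx).
  - intros x y Hx Hy Hxy; exact (side_component_step x y Hx Hxy Hy).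
Qed.

Lemma component_sep_le : sep_le V (component_sep X) (A, B).
Proof.
  destruct HX as (_ & HXside & _); split; simpl.
  - intros x [Hx|Hx]; [apply HXside, Hx|apply nbh_side_component, Hx].
  - intros x HBx Hx; exact (proj2 (HXside x Hx) HBx).
Qed.

Lemma nbh_side_component_full :
  ~ degenerated V E (sepI V (A, B)) X -> forall v, nbh V E X v <-> A v /\ B v.
Proof.
  intros Hnd v; split; [apply nbh_side_component|].
  intro Hv; apply NNPP; intro Hnv; apply Hnd.
  split; [exact side_component_of_separator|split].
  - exact nbh_side_component.
  - now exists v.
Qed.

End SideComponent.

Lemma well_separable_nbh_side_component (Ps : (sep V -> Prop) -> Prop)
  (P P' : sep V -> Prop) (A B X : vset V) :
  well_separable V E Ps -> Ps P -> Ps P' -> R_eff V E Ps P P' (A, B) ->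
  is_component V E (fun v => A v /\ ~ B v) X ->
  forall v, nbh V E X v <-> A v /\ B v.
Proof.
  intros Hws HP HP' [n [Hk [Hn [Hd _]]]] HX.
  apply nbh_side_component_full; [apply Hd|exact HX|].
  apply (Hws n Hk); split; [now exists n|].
  now exists P, P'.
Qed.

Section TightComponents.
Hypothesis Esym : forall x y, E x y -> E y x.
Variables A B : vset V.
Hypothesis HAB : is_separation V E (A, B).
Hypothesis Htight : forall X, is_component V E (fun v => A v /\ ~ B v) X ->
  forall v, nbh V E X v <-> A v /\ B v.

Let sepI_tight X (HX : is_component V E (fun v => A v /\ ~ B v) X) x :
  sepI V (component_sep X) x <-> sepI V (A, B) x.
Proof. rewrite sepI_component_sep, (Htight X HX); reflexivity. Qed.

Lemma k_profile_component_sep k (Q : sep V -> Prop) X :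
  is_k_profile V E k Q -> Q (A, B) ->
  is_component V E (fun v => A v /\ ~ B v) X -> Q (component_sep X).
Proof.
  intros Hk HQ HX.
  pose proof Hk as [_ [Hord _]].
  destruct (Hord _ HQ) as [n [Hn Hnk]].
  apply (k_profile_le_closed k Q _ (A, B) n Hk); auto.
  - apply component_sep_separation.
  - now apply component_sep_le.
  - apply (order_is_ext (A, B)); [intro x; symmetry; now apply sepI_tight|exact Hn].
Qed.

Lemma principal_k_profile_component k (Q : sep V -> Prop) :
  is_k_profile V E k Q -> is_principal V Q -> Q (B, A) ->
  exists X, is_component V E (fun v => A v /\ ~ B v) X /\
            Q (flip V (component_sep X)).
Proof.
  intros Hk Hpr HQ; apply NNPP; intro Hnone.
  assert (Hall : forall X, is_component V E (fun v => A v /\ ~ B v) X ->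
                           Q (component_sep X)).
  { intros X HX.
    pose proof Hk as [_ [Hord Hcomplete]].
    destruct (Hord _ HQ) as [n [Hn Hnk]].
    destruct (Hcomplete (component_sep X)) as [HQX|HQX];
      [apply component_sep_separation| |exact HQX|now exfalso; eauto].
    exists n; split; [|exact Hnk].
    apply (order_is_ext (B, A)); [|exact Hn].
    intro x; rewrite (sepI_tight X HX); unfold sepI; simpl; tauto. }
  set (I := option {X | is_component V E (fun v => A v /\ ~ B v) X}).
  set (f := fun i : I => match i with
                        | None => (B, A)
                        | Some X => component_sep (proj1_sig X) end).
  assert (Hsep : forall i x, sepI V (f i) x <-> A x /\ B x).
  { intros [[X HX]|] x; simpl; [apply (sepI_tight X HX)|unfold sepI; simpl; tauto]. }
  destruct (Hpr I f) as [x Hx].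
  - intros [[X HX]|]; simpl; auto.
  - intros i j y; rewrite Hsep, Hsep; reflexivity.
  - destruct (Hx None) as [HAx HnBx]; simpl in HAx, HnBx.
    destruct (component_exists Esym (fun v => A v /\ ~ B v) x (conj HAx HnBx)) as [X [HX HXx]].
    exact (proj1 (Hx (Some (exist _ X HX))) HXx).
Qed.

Lemma component_sep_distinguishes k (P P' : sep V -> Prop) :
  is_k_profile V E k P -> is_k_profile V E k P' -> is_principal V P' ->
  P (A, B) -> P' (B, A) ->
  exists X, is_component V E (fun v => A v /\ ~ B v) X /\
            distinguishes V E (component_sep X) P P'.
Proof.
  intros HkP HkP' Hpr HPAB HP'BA.
  destruct (principal_k_profile_component k P' HkP' Hpr HP'BA) as [X [HX HP'X]].
  exists X; split; [exact HX|split; [apply component_sep_separation|left]].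
  split; [now apply (k_profile_component_sep k)|exact HP'X].
Qed.

End TightComponents.

End Separations.

Theorem lemma2p7 (V : Type) (E : V -> V -> Prop)
  (Esym : forall x y, E x y -> E y x) (Eirr : forall x, ~ E x x)
  (k : nat) (Ps : (sep V -> Prop) -> Prop)
  (HPs : forall P, Ps P -> is_k_profile V E k P /\ is_principal V P)
  (Hws : well_separable V E Ps)
  (P P' : sep V -> Prop) (HP : Ps P) (HP' : Ps P')
  (A B : vset V) (HAB : R_eff V E Ps P P' (A, B)) :
  exists X : vset V,
    is_component V E (fun v => A v /\ ~ B v) X /\
    R_eff V E Ps P P' ((fun v => X v \/ nbh V E X v), (fun v => ~ X v)).
Proof.
  pose proof HAB as (_ & _ & _ & [HsepAB Horient] & _).
  assert (Htight : forall X, is_component V E (fun v => A v /\ ~ B v) X ->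
                             forall v, nbh V E X v <-> A v /\ B v)
    by (intros X; now apply (well_separable_nbh_side_component V E Ps P P')).
  destruct (HPs P HP) as [HkP HprP], (HPs P' HP') as [HkP' HprP'].
  assert (Hdist : exists X, is_component V E (fun v => A v /\ ~ B v) X /\
                            distinguishes V E (component_sep V E X) P P').
  { destruct Horient as [[HPAB HP'BA]|[HPBA HP'AB]].
    - now apply (component_sep_distinguishes V E Esym A B HsepAB Htight k).
    - destruct (component_sep_distinguishes V E Esym A B HsepAB Htight k P' P)
        as [X [HX Hd]]; auto.
      exists X; split; [exact HX|now apply distinguishes_sym]. }
  destruct Hdist as [X [HX Hd]].
  exists X; split; [exact HX|].
  apply (R_eff_same_separator V E Ps P P' (A, B)); [|exact Hd|exact HAB].
  intro x; rewrite (sepI_component_sep V E X x), (Htight X HX); reflexivity.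
Qed.
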